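(* For all $p,q\ge1$ and every set $X$, the free Burnside monoid $B^I_X(p,q)$ is isomorphic (as an $X$-monoid) to $\mathrm{Rh}_X(B^I_X(p,q))$.
   Context: $B_X(p,q)$ is the free semigroup on $X$ in the variety defined by $x^{p+q}=x^p$, i.e. presented by $\langle X\mid u^{p+q}=u^p\ (u\in X^+)\rangle$; $B^I_X(p,q)$ is obtained by adjoining a new identity $I$, regarded as an $X$-monoid via $X\subseteq B_X(p,q)$. For a monoid $N$ generated by $X$, the Rhodes expansion $\mathrm{Rh}(N)$ is the monoid of finite chains $(n_k<_{\mathcal L}\cdots<_{\mathcal L}n_0=1)$ with product $\sigma\tau=\mathrm{lm}(n_km\le_{\mathcal L}\cdots\le_{\mathcal L}n_1m\le_{\mathcal L}\tau)$ ($m$ the leftmost term of $\tau$, $\mathrm{lm}$ keeping the leftmost element of each block of $\mathcal L$-equivalent terms), and $\mathrm{Rh}_X(N)$ is its submonoid generated by the chains $(x<_{\mathcal L}1)$, $x\in X$; the canonical morphism to $N$ sends a chain to its leftmost term. *)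

From Stdlib Require Import List Relations ClassicalEpsilon Sorted.
Import ListNotations.
Set Implicit Arguments.

Fixpoint wpow (X : Type) (u : list X) (n : nat) : list X :=
  match n with 0 => [] | S n' => u ++ wpow u n' end.

Inductive bstep (X : Type) (p q : nat) : list X -> list X -> Prop :=
| bstep_intro : forall w1 u w2, u <> [] ->
    bstep p q (w1 ++ wpow u (p + q) ++ w2) (w1 ++ wpow u p ++ w2).

Definition bcong (X : Type) (p q : nat) : relation (list X) :=
  clos_refl_sym_trans _ (bstep (X:=X) p q).

(* B^I_X(p,q) = X^* / bcong  (the class of the empty word is the adjoined identity I) *)
Definition BI (X : Type) (p q : nat) : Type :=
  { P : list X -> Prop | exists w, P = bcong p q w }.

Definition bcls (X : Type) (p q : nat) (w : list X) : BI X p q :=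
  exist (fun P => exists w', P = bcong p q w') (bcong p q w) (ex_intro _ w eq_refl).

Definition brep (X : Type) (p q : nat) (a : BI X p q) : list X :=
  proj1_sig (constructive_indefinite_description _ (proj2_sig a)).

Definition bmul (X : Type) (p q : nat) (a b : BI X p q) : BI X p q :=
  bcls p q (brep a ++ brep b).

Definition bone (X : Type) (p q : nat) : BI X p q := bcls p q [].

Definition bgen (X : Type) (p q : nat) (x : X) : BI X p q := bcls p q [x].

Section Rhodes.
Variables (N : Type) (mul : N -> N -> N) (one : N).

Definition leL (a b : N) : Prop := exists s, a = mul s b.
Definition ltL (a b : N) : Prop := leL a b /\ ~ leL b a.
Definition eqL (a b : N) : Prop := leL a b /\ leL b a.

Definition eqLb (a b : N) : bool :=
  if excluded_middle_informative (eqL a b) then true else false.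

Fixpoint lm_aux (a : N) (r : list N) : list N :=
  match r with
  | [] => [a]
  | b :: r' => if eqLb a b then lm_aux a r' else a :: lm_aux b r'
  end.

Definition lm (l : list N) : list N :=
  match l with [] => [] | a :: r => lm_aux a r end.

(* A chain (n_k <_L ... <_L n_0 = 1) is the list [n_k; ...; n_1; n_0] *)
Definition is_chain (c : list N) : Prop :=
  exists ns, c = ns ++ [one] /\ Sorted ltL c.

(* sigma tau = lm(n_k m <= ... <= n_1 m <= tau), m = leftmost term of tau *)
Definition rh_mul (sigma tau : list N) : list N :=
  lm (map (fun n => mul n (hd one tau)) (removelast sigma) ++ tau).

Inductive RhX (X : Type) (g : X -> N) : list N -> Prop :=
| RhX_one : RhX g [one]
| RhX_gen : forall x, RhX g [g x; one]
| RhX_mul : forall s t, RhX g s -> RhX g t -> RhX g (rh_mul s t).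

End Rhodes.

(* Send a word [w] to the chain of classes of its suffixes [w, ..., x_n, 1] in
   which runs of L-equivalent terms are merged.  Since the suffixes of [uv] are the
   suffixes of [u] multiplied by [v] followed by those of [v], and merging commutes
   with right multiplication, this map turns concatenation into the Rhodes product.
   It respects [u^(p+q) = u^p] because every suffix of [u^q u^p w] longer than
   [u^p w] is L-equivalent to [u^p w]: prepending enough copies of [u] returns to
   it.  The leftmost term of the chain of [w] is the class of [w], so the induced
   map on [B^I_X(p,q)] is injective, and its image is generated by the chains of
   letters, which are the generators of [Rh_X]. *)

From Stdlib Require Import List Relations Arith Lia ClassicalEpsilon FunctionalExtensionality PropExtensionality ProofIrrelevance.
Import ListNotations.

Section LeftmostReduction.
Local Set Implicit Arguments.
Variables (N : Type) (mul : N -> N -> N) (one : N).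
Hypothesis mul_assoc : forall a b c, mul (mul a b) c = mul a (mul b c).
Hypothesis mul1n : forall a, mul one a = a.

Notation E := (eqL mul).
Notation lm := (lm mul).
Notation lm_aux := (lm_aux mul).

Lemma leL_trans a b c : leL mul a b -> leL mul b c -> leL mul a c.
Proof. intros [s ->] [t ->]. exists (mul s t). symmetry; apply mul_assoc. Qed.

Lemma eqL_refl a : E a a.
Proof. split; exists one; symmetry; apply mul1n. Qed.

Lemma eqL_trans a b c : E a b -> E b c -> E a c.
Proof. intros [H1 H2] [H3 H4]; split; eapply leL_trans; eassumption. Qed.

Lemma eqL_mulr m a b : E a b -> E (mul a m) (mul b m).
Proof.
  intros [[s Hs] [t Ht]]; split;
    [exists s; rewrite Hs | exists t; rewrite Ht]; apply mul_assoc.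
Qed.

Lemma eqLbP a b : Bool.reflect (E a b) (eqLb mul a b).
Proof. unfold eqLb; destruct excluded_middle_informative; constructor; assumption. Qed.

Lemma eqLb_true a b : E a b -> eqLb mul a b = true.
Proof. destruct (eqLbP a b); tauto. Qed.

Lemma eqLb_false a b : ~ E a b -> eqLb mul a b = false.
Proof. destruct (eqLbP a b); tauto. Qed.

Lemma lm_aux_head a r : exists t, lm_aux a r = a :: t.
Proof.
  revert a; induction r as [|b r IH]; intro a; simpl; [eauto|].
  destruct (eqLb mul a b); eauto.
Qed.

Lemma lm_app_noneqL l b :
  (forall x, In x l -> ~ E x b) -> lm (l ++ [b]) = lm l ++ [b].
Proof.
  destruct l as [|h l]; intro Hl; [reflexivity|]; simpl.
  revert h Hl; induction l as [|c l IH]; intros h Hl; simpl.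
  - rewrite eqLb_false; auto. apply Hl; simpl; auto.
  - destruct (eqLb mul h c); simpl; rewrite IH; auto;
      intros x Hx; apply Hl; simpl in *; tauto.
Qed.

Inductive drop_eqL : list N -> list N -> Prop :=
| drop_eqL_intro pre a b r : E a b -> drop_eqL (pre ++ a :: b :: r) (pre ++ a :: r).

Definition reduce_eqL : relation (list N) := clos_refl_trans _ drop_eqL.

Lemma lm_aux_drop h pre a b r :
  E a b -> lm_aux h (pre ++ a :: b :: r) = lm_aux h (pre ++ a :: r).
Proof.
  intro Hab; revert h; induction pre as [|c pre IH]; intro h; simpl.
  - destruct (eqLbP h a) as [Hha|Hha].
    + rewrite (eqLb_true (eqL_trans Hha Hab)); reflexivity.
    + rewrite (eqLb_true Hab); reflexivity.
  - destruct (eqLb mul h c); rewrite IH; reflexivity.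
Qed.

Lemma lm_reduce_eqL l l' : reduce_eqL l l' -> lm l = lm l'.
Proof.
  induction 1 as [l l' [pre a b r Hab]| |]; [|reflexivity|congruence].
  destruct pre as [|c pre]; simpl.
  - rewrite (eqLb_true Hab); reflexivity.
  - apply lm_aux_drop; assumption.
Qed.

Lemma reduce_eqL_lift (F : list N -> list N) :
  (forall l l', drop_eqL l l' -> drop_eqL (F l) (F l')) ->
  forall l l', reduce_eqL l l' -> reduce_eqL (F l) (F l').
Proof.
  intros HF l l'; induction 1;
    [apply rt_step; auto | apply rt_refl | eapply rt_trans; eassumption].
Qed.

Lemma reduce_eqL_app l1 l1' l2 l2' :
  reduce_eqL l1 l1' -> reduce_eqL l2 l2' -> reduce_eqL (l1 ++ l2) (l1' ++ l2').
Proof.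
  intros H1 H2. apply rt_trans with (l1' ++ l2).
  - apply (reduce_eqL_lift (fun l => l ++ l2)); auto.
    intros _ _ [pre a b r H]. rewrite <- !app_assoc. apply drop_eqL_intro, H.
  - apply (reduce_eqL_lift (fun l => l1' ++ l)); auto.
    intros _ _ [pre a b r H]. rewrite !app_assoc. apply drop_eqL_intro, H.
Qed.

Lemma reduce_eqL_map_mulr m l l' : reduce_eqL l l' ->
  reduce_eqL (map (fun n => mul n m) l) (map (fun n => mul n m) l').
Proof.
  apply reduce_eqL_lift. intros _ _ [pre a b r H].
  rewrite !map_app. apply drop_eqL_intro, eqL_mulr, H.
Qed.

Lemma reduce_eqL_lm l : reduce_eqL l (lm l).
Proof.
  destruct l as [|a r]; [apply rt_refl|]; simpl.
  revert a; induction r as [|b r IH]; intro a; simpl; [apply rt_refl|].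
  destruct (eqLbP a b) as [Hab|_].
  - eapply rt_trans; [|apply IH]. apply rt_step, (drop_eqL_intro [] r Hab).
  - apply (reduce_eqL_lift (cons a)); auto.
    intros _ _ [pre c d r' H]. apply (drop_eqL_intro (a :: pre) r' H).
Qed.

Lemma reduce_eqL_block pre b l r :
  (forall x, In x l -> E b x) -> reduce_eqL (pre ++ b :: l ++ b :: r) (pre ++ b :: r).
Proof.
  induction l as [|c l IH]; intro Hl; simpl.
  - apply rt_step, drop_eqL_intro, eqL_refl.
  - eapply rt_trans; [apply rt_step, drop_eqL_intro, Hl; simpl; auto|].
    apply IH. intros x Hx; apply Hl; simpl; auto.
Qed.

Lemma lm_map_mulr_app m l r :
  lm (map (fun n => mul n m) l ++ r) = lm (map (fun n => mul n m) (lm l) ++ lm r).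
Proof.
  apply lm_reduce_eqL, reduce_eqL_app;
    [apply reduce_eqL_map_mulr|]; apply reduce_eqL_lm.
Qed.

End LeftmostReduction.

Section FreeBurnside.
Local Set Implicit Arguments.
Variables (X : Type) (p q : nat).
Hypotheses (hp : 1 <= p) (hq : 1 <= q).

Notation bc := (bcong (X:=X) p q).
Notation B := (BI X p q).
Notation cls := (bcls (X:=X) p q).
Notation mul := (@bmul X p q).
Notation one := (bone X p q).
Notation E := (eqL mul).

Lemma wpow_add (u : list X) m n : wpow u (m + n) = wpow u m ++ wpow u n.
Proof. induction m; simpl; [reflexivity | rewrite IHm; apply app_assoc]. Qed.

Lemma wpow_nil (u : list X) n : u <> [] -> 0 < n -> wpow u n <> [].
Proof. intros Hu Hn. destruct n; [lia|]. simpl; intro H; apply app_eq_nil in H; tauto. Qed.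

Lemma bcong_ctx (l r x y : list X) : bc x y -> bc (l ++ x ++ r) (l ++ y ++ r).
Proof.
  induction 1 as [x y [w1 u w2 Hu]| | |].
  - apply rst_step. pose proof (bstep_intro p q (l ++ w1) (w2 ++ r) Hu) as H.
    rewrite <- !app_assoc in *. exact H.
  - apply rst_refl.
  - apply rst_sym; assumption.
  - eapply rst_trans; eassumption.
Qed.

Lemma bcong_app (a a' b b' : list X) : bc a a' -> bc b b' -> bc (a ++ b) (a' ++ b').
Proof.
  intros Ha Hb. apply rst_trans with (a' ++ b).
  - exact (bcong_ctx [] b Ha).
  - pose proof (bcong_ctx a' [] Hb) as H. rewrite !app_nil_r in H. exact H.
Qed.

(* With [1 <= p] no relation [u^(p+q) = u^p] involves the empty word. *)
Lemma bcong_nil (x y : list X) : bc x y -> (x = [] <-> y = []).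
Proof.
  assert (Hstep : forall x y : list X, bstep p q x y -> x <> [] /\ y <> []).
  { intros _ _ [w1 u w2 Hu].
    split; intro H; apply app_eq_nil in H; destruct H as [_ H];
      apply app_eq_nil in H; destruct H as [H _]; revert H; apply wpow_nil; auto; lia. }
  induction 1 as [x y H| | |]; [apply Hstep in H|..]; tauto.
Qed.

Lemma bcong_wpow_absorb (u w : list X) j : u <> [] -> bc (wpow u (p + j * q) ++ w) (wpow u p ++ w).
Proof.
  intro Hu. induction j as [|j IH].
  - replace (p + 0 * q) with p by lia. apply rst_refl.
  - eapply rst_trans; [|apply IH].
    replace (p + S j * q) with ((p + q) + j * q) by lia.
    rewrite (wpow_add u (p + q) (j * q)), (wpow_add u p (j * q)), <- !app_assoc.
    apply rst_step, (bstep_intro p q [] (wpow u (j * q) ++ w) Hu).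
Qed.

Lemma bcls_eq (a b : list X) : bc a b -> cls a = cls b.
Proof.
  intro H. apply subset_eq_compat.
  extensionality z. apply propositional_extensionality. split; intro.
  - eapply rst_trans; [apply rst_sym, H|]; assumption.
  - eapply rst_trans; [apply H|]; assumption.
Qed.

Lemma bcls_inj (a b : list X) : cls a = cls b -> bc a b.
Proof.
  intro H. apply (f_equal (@proj1_sig _ _)) in H. simpl in H.
  rewrite H. apply rst_refl.
Qed.

Lemma bcls_brep (a : B) : cls (brep a) = a.
Proof.
  destruct a as [P HP]. unfold brep, bcls. simpl. apply subset_eq_compat.
  destruct (constructive_indefinite_description _ HP) as [w Hw]; simpl; auto.
Qed.

Lemma brep_bcls (w : list X) : bc (brep (cls w)) w.
Proof. apply bcls_inj, bcls_brep. Qed.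

Lemma bmul_bcls (x y : list X) : mul (cls x) (cls y) = cls (x ++ y).
Proof. apply bcls_eq, bcong_app; apply brep_bcls. Qed.

Lemma bmul_assoc a b c : mul (mul a b) c = mul a (mul b c).
Proof.
  rewrite <- (bcls_brep a), <- (bcls_brep b), <- (bcls_brep c).
  rewrite !bmul_bcls, app_assoc. reflexivity.
Qed.

Lemma bmul1 a : mul one a = a.
Proof. rewrite <- (bcls_brep a). unfold bone. rewrite bmul_bcls. reflexivity. Qed.

Lemma bcls_not_eqL_one (s : list X) : s <> [] -> ~ E (cls s) one.
Proof.
  intros Hs [_ [t Ht]]. rewrite <- (bcls_brep t), bmul_bcls in Ht.
  apply bcls_inj, bcong_nil in Ht.
  destruct (brep t ++ s) eqn:Hts.
  - apply app_eq_nil in Hts; tauto.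
  - discriminate (proj1 Ht eq_refl).
Qed.

Lemma wpow_suffix (u : list X) n r' s : wpow u n = r' ++ s ->
  exists r s0 k, u = r ++ s0 /\ s = s0 ++ wpow u k.
Proof.
  revert r' s; induction n as [|n IH]; intros r' s H; simpl in H.
  - symmetry in H; apply app_eq_nil in H. destruct H as [_ ->].
    exists u, [], 0. rewrite app_nil_r; auto.
  - apply app_eq_app in H. destruct H as [l [[H1 H2]|[H1 H2]]].
    + exists r', l, n; auto.
    + apply (IH l s); auto.
Qed.

(* Writing [s = s0 u^k] with [u = r s0], prepending [u^m r] to [s u^p w] gives
   [u^(p + (k+p+1) q) w], which reduces to [u^p w]. *)
Lemma eqL_suffix_pow (u w r' s : list X) n : u <> [] -> wpow u n = r' ++ s ->
  E (cls (wpow u p ++ w)) (cls (s ++ wpow u p ++ w)).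
Proof.
  intros Hu Hs. destruct (wpow_suffix u n r' s Hs) as [r [s0 [k [Hr ->]]]].
  split.
  - set (m := p + (k + p + 1) * q - (k + p + 1)).
    exists (cls (wpow u m ++ r)). rewrite bmul_bcls. apply bcls_eq, rst_sym.
    replace ((wpow u m ++ r) ++ (s0 ++ wpow u k) ++ wpow u p ++ w)
      with (wpow u (p + (k + p + 1) * q) ++ w); [apply bcong_wpow_absorb; assumption|].
    replace (p + (k + p + 1) * q) with (m + (1 + (k + p))) by (unfold m; nia).
    rewrite !wpow_add. simpl. rewrite app_nil_r, Hr, <- !app_assoc. reflexivity.
  - exists (cls (s0 ++ wpow u k)). rewrite bmul_bcls, <- app_assoc. reflexivity.
Qed.

Fixpoint nonempty_suffixes (w : list X) : list (list X) :=
  match w with [] => [] | _ :: w' => w :: nonempty_suffixes w' end.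

(* [one] is the class of the empty suffix. *)
Definition suffix_chain (w : list X) : list B :=
  lm mul (map cls (nonempty_suffixes w) ++ [one]).

Lemma nonempty_suffixes_app u v :
  nonempty_suffixes (u ++ v) = map (fun s => s ++ v) (nonempty_suffixes u) ++ nonempty_suffixes v.
Proof. induction u as [|x u IH]; simpl; [|rewrite IH]; reflexivity. Qed.

Lemma nonempty_suffixes_cons w : w <> [] -> nonempty_suffixes w = w :: nonempty_suffixes (tl w).
Proof. destruct w; [contradiction | reflexivity]. Qed.

Lemma in_nonempty_suffixes s w :
  In s (nonempty_suffixes w) -> s <> [] /\ exists r, w = r ++ s.
Proof.
  induction w as [|x w IH]; simpl; [tauto|]. intros [<-|H].
  - split; [discriminate | exists []; reflexivity].
  - destruct (IH H) as [Hs [r ->]]. split; [assumption | exists (x :: r); reflexivity].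
Qed.

Lemma suffix_chain_head w : exists t, suffix_chain w = cls w :: t.
Proof.
  destruct w as [|x w]; [exists []; reflexivity|].
  apply lm_aux_head.
Qed.

Lemma suffix_chain_lm w :
  suffix_chain w = lm mul (map cls (nonempty_suffixes w)) ++ [one].
Proof.
  apply lm_app_noneqL. intros x Hx.
  apply in_map_iff in Hx. destruct Hx as [s [<- Hs]].
  apply bcls_not_eqL_one, (in_nonempty_suffixes s w Hs).
Qed.

Lemma suffix_chain_app u v :
  suffix_chain (u ++ v) = rh_mul mul one (suffix_chain u) (suffix_chain v).
Proof.
  unfold rh_mul. rewrite (suffix_chain_lm u), removelast_last.
  destruct (suffix_chain_head v) as [t Ht]. rewrite Ht; simpl hd; rewrite <- Ht.
  unfold suffix_chain at 1 2.
  rewrite nonempty_suffixes_app, map_app, <- app_assoc.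
  replace (map cls (map (fun s => s ++ v) (nonempty_suffixes u)))
    with (map (fun n => mul n (cls v)) (map cls (nonempty_suffixes u)))
    by (rewrite !map_map; apply map_ext; intro; apply bmul_bcls).
  exact (lm_map_mulr_app _ bmul_assoc _ _ _).
Qed.

(* All suffixes of [u^q u^p w] longer than [u^p w] are L-equivalent to it, so [lm]
   collapses them into the block of [u^p w]. *)
Lemma suffix_chain_bstep x y : bstep p q x y -> suffix_chain x = suffix_chain y.
Proof.
  intros [w1 u w2 Hu]. set (v := wpow u p ++ w2).
  assert (Hv : v <> []).
  { intro H. apply app_eq_nil in H. apply (wpow_nil Hu (n := p)); [lia | apply H]. }
  assert (Hq : wpow u q <> []) by (apply wpow_nil; [assumption | lia]).
  assert (Hx : w1 ++ wpow u (p + q) ++ w2 = w1 ++ wpow u q ++ v).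
  { unfold v. rewrite Nat.add_comm, wpow_add, <- app_assoc. reflexivity. }
  assert (Habsorb : forall s, bc (s ++ wpow u q ++ v) (s ++ v)).
  { intro s. apply rst_step. pose proof (bstep_intro p q s w2 Hu) as H.
    rewrite Nat.add_comm, wpow_add, <- app_assoc in H. exact H. }
  rewrite Hx. unfold suffix_chain.
  rewrite !nonempty_suffixes_app, (nonempty_suffixes_cons Hq), (nonempty_suffixes_cons Hv).
  rewrite !map_app, !map_map. simpl map.
  rewrite (map_ext _ _ (fun s => bcls_eq (Habsorb s))).
  rewrite (bcls_eq (Habsorb [] : bc (wpow u q ++ v) v)).
  apply (lm_reduce_eqL bmul_assoc). rewrite <- !app_assoc. simpl.
  apply (@reduce_eqL_block _ _ _ bmul1). intros c Hc.
  apply in_map_iff in Hc. destruct Hc as [s [<- Hs]].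
  assert (Hs' : In s (nonempty_suffixes (wpow u q)))
    by (rewrite (nonempty_suffixes_cons Hq); right; exact Hs).
  destruct (in_nonempty_suffixes _ _ Hs') as [_ [r Hr]].
  exact (eqL_suffix_pow w2 r s q Hu Hr).
Qed.

Lemma suffix_chain_bcong x y : bc x y -> suffix_chain x = suffix_chain y.
Proof.
  induction 1; [apply suffix_chain_bstep; assumption | reflexivity | congruence | congruence].
Qed.

Lemma suffix_chain_nil : suffix_chain [] = [one].
Proof. reflexivity. Qed.

Lemma suffix_chain_letter x : suffix_chain [x] = [bgen p q x; one].
Proof.
  unfold suffix_chain. simpl. rewrite eqLb_false; [reflexivity|].
  apply bcls_not_eqL_one. discriminate.
Qed.

Definition rh_chain (a : B) : list B := suffix_chain (brep a).

Lemma rh_chain_bcls w : rh_chain (cls w) = suffix_chain w.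
Proof. apply suffix_chain_bcong, brep_bcls. Qed.

Lemma rh_chain_inj a b : rh_chain a = rh_chain b -> a = b.
Proof.
  destruct (suffix_chain_head (brep a)) as [ta Ha].
  destruct (suffix_chain_head (brep b)) as [tb Hb].
  unfold rh_chain. rewrite Ha, Hb. intro H.
  rewrite <- (bcls_brep a), <- (bcls_brep b). congruence.
Qed.

Lemma rh_chain_mul a b : rh_chain (mul a b) = rh_mul mul one (rh_chain a) (rh_chain b).
Proof. unfold bmul at 1. rewrite rh_chain_bcls. apply suffix_chain_app. Qed.

Lemma rh_chain_bgen x : rh_chain (bgen p q x) = [bgen p q x; one].
Proof. unfold bgen at 1. rewrite rh_chain_bcls. apply suffix_chain_letter. Qed.

Lemma RhX_rh_chain a : RhX mul one (bgen p q) (rh_chain a).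
Proof.
  unfold rh_chain. induction (brep a) as [|x w IH].
  - rewrite suffix_chain_nil. apply RhX_one.
  - change (x :: w) with ([x] ++ w). rewrite suffix_chain_app, suffix_chain_letter.
    apply RhX_mul; [apply RhX_gen | exact IH].
Qed.

Lemma RhX_rh_chain_image c : RhX mul one (bgen p q) c -> exists a, rh_chain a = c.
Proof.
  induction 1 as [|x|s t _ [a <-] _ [b <-]].
  - exists one. apply rh_chain_bcls.
  - exists (bgen p q x). apply rh_chain_bgen.
  - exists (mul a b). apply rh_chain_mul.
Qed.

End FreeBurnside.

Theorem lemma9p1 (X : Type) (p q : nat) (hp : 1 <= p) (hq : 1 <= q) :
  exists phi : BI X p q -> list (BI X p q),
    (forall a b, phi a = phi b -> a = b) /\
    (forall a, RhX (@bmul X p q) (bone X p q) (@bgen X p q) (phi a)) /\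
    (forall c, RhX (@bmul X p q) (bone X p q) (@bgen X p q) c -> exists a, phi a = c) /\
    phi (bone X p q) = [bone X p q] /\
    (forall a b, phi (bmul a b) = rh_mul (@bmul X p q) (bone X p q) (phi a) (phi b)) /\
    (forall x, phi (bgen p q x) = [bgen p q x; bone X p q]).
Proof.
  exists (@rh_chain X p q).
  split; [|split; [|split; [|split; [|split]]]].
  - apply rh_chain_inj.
  - exact (RhX_rh_chain hp hq).
  - exact (RhX_rh_chain_image hp hq).
  - exact (rh_chain_bcls hp hq []).
  - exact (rh_chain_mul hp hq).
  - exact (rh_chain_bgen hp hq).
Qed.
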